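(* Let $\{w^k\}$ be generated by Algorithm 2 (running infinitely). Each accumulation point $\bar w$ of $\{w^k\}$ is feasible for (P) (i.e., $G(\bar w)\in C$ and $\bar w\in D$) provided one of the following holds: (a) $\{\rho_k\}$ is bounded; or (b) there is $B\in\mathbb R$ with $\mathcal L_{\rho_k}(w^{k+1},u^k)\le B$ for all $k\in\mathbb N$.
   Context: Standing setting: $\mathbb W,\mathbb Y$ Euclidean spaces; (P) is $\min f(w)$ s.t. $G(w)\in C$, $w\in D$, with $f\colon\mathbb W\to\mathbb R$, $G\colon\mathbb W\to\mathbb Y$ continuously differentiable, $C\subset\mathbb Y$ nonempty closed convex, $D\subset\mathbb W$ nonempty closed. $P_C$ is the Euclidean projection onto $C$, $d_C(y)=\|y-P_C(y)\|$; $\mathcal N^{\lim}_D(\bar w):=\limsup_{w\to\bar w}\operatorname{cone}(w-\Pi_D(w))$ for $\bar w\in D$ ($\Pi_D$ multivalued projection, outer set limit), $\varnothing$ for $\bar w\notin D$. Augmented Lagrangian $\mathcal L_\rho(w,\lambda):=f(w)+\frac\rho2 d_C^2(G(w)+\lambda/\rho)$; $V_\rho(w,u):=\|G(w)-P_C(G(w)+u/\rho)\|$. Algorithm 2: data $\rho_0>0$, $\beta>1$, $\eta\in(0,1)$, $w^0\in D$, a nonempty bounded set $U\subset\mathbb Y$. For $k=0,1,\dots$: choose $u^k\in U$; compute $w^{k+1}$ and $\varepsilon^{k+1}\in\mathbb W$ with $\varepsilon^{k+1}\in\nabla_w\mathcal L_{\rho_k}(w^{k+1},u^k)+\mathcal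 N^{\lim}_D(w^{k+1})$ (so $w^{k+1}\in D$); set $\lambda^{k+1}:=\rho_k[G(w^{k+1})+u^k/\rho_k-P_C(G(w^{k+1})+u^k/\rho_k)]$; if $k=0$ or $V_{\rho_k}(w^{k+1},u^k)\le\eta V_{\rho_{k-1}}(w^k,u^{k-1})$ set $\rho_{k+1}:=\rho_k$, else $\rho_{k+1}:=\beta\rho_k$. *)

(* W = 'rV[R]_n, Y = 'rV[R]_m with the Euclidean
   inner product and norm defined below. *)
From HB Require Import structures.
From mathcomp Require Import all_boot all_order all_algebra.
From mathcomp Require Import all_classical all_reals all_analysis.
Set Implicit Arguments. Unset Strict Implicit. Unset Printing Implicit Defensive.
Import Order.TTheory GRing.Theory Num.Theory.
Import numFieldNormedType.Exports.
Local Open Scope classical_set_scope.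
Local Open Scope ring_scope.

Section Defs.
Variable R : realType.

Definition inner (k : nat) (x y : 'rV[R]_k) : R := \sum_(i < k) x 0 i * y 0 i.
Definition enorm (k : nat) (x : 'rV[R]_k) : R := Num.sqrt (inner x x).

Definition eclosed (k : nat) (A : set 'rV[R]_k) : Prop :=
  forall x, (forall e : R, 0 < e -> exists2 y, A y & enorm (x - y) < e) -> A x.
Definition econvex (k : nat) (A : set 'rV[R]_k) : Prop :=
  forall x y (t : R), A x -> A y -> 0 <= t <= 1 -> A (t *: x + (1 - t) *: y).
Definition ebounded (k : nat) (A : set 'rV[R]_k) : Prop :=
  exists M : R, forall y, A y -> enorm y <= M.
Definition seq_conv (k : nat) (x : nat -> 'rV[R]_k) (l : 'rV[R]_k) : Prop :=
  forall e : R, 0 < e -> exists N, forall j, (N <= j)%N -> enorm (x j - l) < e.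
Definition accum_point (k : nat) (x : nat -> 'rV[R]_k) (l : 'rV[R]_k) : Prop :=
  forall e : R, 0 < e -> forall N, exists2 j, (N <= j)%N & enorm (x j - l) < e.

Definition PiD (k : nat) (D : set 'rV[R]_k) (w : 'rV[R]_k) : set 'rV[R]_k :=
  [set p | D p /\ forall d, D d -> enorm (w - p) <= enorm (w - d)].

(* Euclidean projection P_C onto C (a chosen nearest point; unique when C is
   nonempty closed convex) and distance d_C *)
Definition projC (k : nat) (C : set 'rV[R]_k) (y : 'rV[R]_k) : 'rV[R]_k :=
  xget y (PiD C y).
Definition distC (k : nat) (C : set 'rV[R]_k) (y : 'rV[R]_k) : R :=
  enorm (y - projC C y).

Definition cone (k : nat) (A : set 'rV[R]_k) : set 'rV[R]_k :=
  [set v | exists t : R, exists2 a, A a & 0 <= t /\ v = t *: a].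

(* limiting normal cone: outer limit of cone(w - Pi_D(w)) as w -> wbar *)
Definition Nlim (k : nat) (D : set 'rV[R]_k) (wbar : 'rV[R]_k) : set 'rV[R]_k :=
  [set v | D wbar /\
     exists (ws vs : nat -> 'rV[R]_k), [/\ seq_conv ws wbar, seq_conv vs v &
       forall j, cone [set ws j - p | p in PiD D (ws j)] (vs j)]].

Definition is_grad (k : nat) (phi : 'rV[R]_k -> R) (w g : 'rV[R]_k) : Prop :=
  differentiable phi w /\ forall h, 'd phi w h = inner g h.

Definition AugL (n m : nat) (f : 'rV[R]_n -> R) (G : 'rV[R]_n -> 'rV[R]_m)
  (C : set 'rV[R]_m) (rho : R) (w : 'rV[R]_n) (lam : 'rV[R]_m) : R :=
  f w + rho / 2 * distC C (G w + rho^-1 *: lam) ^+ 2.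
Definition Vrho (n m : nat) (G : 'rV[R]_n -> 'rV[R]_m) (C : set 'rV[R]_m)
  (rho : R) (w : 'rV[R]_n) (u : 'rV[R]_m) : R :=
  enorm (G w - projC C (G w + rho^-1 *: u)).

Definition C1 (n k : nat) (F : 'rV[R]_n -> 'rV[R]_k) : Prop :=
  (forall w, differentiable F w) /\ forall h, continuous (fun w => 'd F w h).
Definition C1r (n : nat) (F : 'rV[R]_n -> R) : Prop :=
  (forall w, differentiable F w) /\ forall h, continuous (fun w => 'd F w h).

Definition algorithm2 (n m : nat) (f : 'rV[R]_n -> R) (G : 'rV[R]_n -> 'rV[R]_m)
  (C : set 'rV[R]_m) (D : set 'rV[R]_n) (rho0 beta eta : R) (U : set 'rV[R]_m)
  (w eps : nat -> 'rV[R]_n) (u : nat -> 'rV[R]_m) (rho : nat -> R) : Prop :=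
  [/\ rho 0%N = rho0, D (w 0%N),
      forall k, U (u k),
      forall k, exists2 g, is_grad (fun x => AugL f G C (rho k) x (u k)) (w k.+1) g
                        & Nlim D (w k.+1) (eps k.+1 - g) &
      forall k, rho k.+1 =
        (if (k == 0)%N || (Vrho G C (rho k) (w k.+1) (u k)
                            <= eta * Vrho G C (rho k.-1) (w k) (u k.-1))
         then rho k else beta * rho k)].
End Defs.

(* Since every iterate lies
   in the closed set D, so does w̄.  For G(w̄) ∈ C it suffices, by continuity
   of G and closedness of C, that G(w^j) comes arbitrarily close to C for
   late indices j with w^j near w̄ (lemma [accum_image_in]).  Two regimes of
   the penalty parameters ρ_k (nondecreasing, multiplied by β > 1 or kept):
   - ρ_k bounded: then ρ_k is eventually constant, so the residual
     V_k = ‖G(w^{k+1}) - P_C(G(w^{k+1}) + u^k/ρ_k)‖ contracts by the factor η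
     from some index on and tends to 0 ([bounded_rho_residual_vanishes]);
     each residual bounds the distance from G(w^{k+1}) to C.
   - ρ_k unbounded and the augmented Lagrangian values bounded by B: since f
     is bounded below near w̄, (ρ_k/2) d_C(G(w^{k+1}) + u^k/ρ_k)² stays below
     a constant, while u^k/ρ_k → 0 because U is bounded
     ([unbounded_penalty_close]).
   Hypothesis (a) is the first regime; hypothesis (b) reduces to one of them. *)
From HB Require Import structures.
From mathcomp Require Import all_boot all_order all_algebra.
From mathcomp Require Import all_classical all_reals all_analysis.
From mathcomp Require Import lra zify.
Set Implicit Arguments. Unset Strict Implicit. Unset Printing Implicit Defensive.
Import Order.TTheory GRing.Theory Num.Theory Num.Def.
Import numFieldNormedType.Exports.
Local Open Scope classical_set_scope.
Local Open Scope ring_scope.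

Section EuclideanNorm.
Variable R : realType.

Lemma inner_ge0 k (x : 'rV[R]_k) : 0 <= inner x x.
Proof. by apply: sumr_ge0 => i _; rewrite -expr2 sqr_ge0. Qed.

Lemma enorm_ge0 k (x : 'rV[R]_k) : 0 <= enorm x.
Proof. exact: sqrtr_ge0. Qed.

Lemma enormB k (x y : 'rV[R]_k) : enorm (x - y) = enorm (y - x).
Proof.
rewrite /enorm /inner; congr Num.sqrt; apply: eq_bigr => i _.
by rewrite !mxE -mulrNN !opprB.
Qed.

Lemma norm_le_enorm k (x : 'rV[R]_k) : `|x| <= enorm x.
Proof.
rewrite [leLHS]/normr /= mx_normrE; apply/bigmax_leP; split => /=.
  exact: enorm_ge0.
move=> [a i] _ /=; rewrite (ord1 a) -sqrtr_sqr /enorm ler_sqrt ?inner_ge0 //.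
rewrite /inner (bigD1 i) //= expr2 lerDl.
by apply: sumr_ge0 => j _; rewrite -expr2 sqr_ge0.
Qed.

Lemma enorm_le_norm k (x : 'rV[R]_k) : enorm x <= k.+1%:R * `|x|.
Proof.
have coord_le i : `|x 0 i| <= `|x|.
  by rewrite [leRHS]/normr /= mx_normrE; apply/bigmax_geP; right; exists (0, i).
rewrite -[k.+1%:R * _]ger0_norm ?mulr_ge0 // -sqrtr_sqr /enorm.
rewrite ler_sqrt ?sqr_ge0 //.
apply: (@le_trans _ _ (\sum_(i < k) `|x| ^+ 2)).
  apply: ler_sum => i _; rewrite -expr2 -real_normK ?num_real //.
  by rewrite lerXn2r ?nnegrE // coord_le.
rewrite sumr_const card_ord -mulr_natl -[k.+1]addn1 natrD.
have : 0 <= k%:R :> R by [].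
have : 0 <= `|x| by [].
set t := `|x|; set q := k%:R; nra.
Qed.

Lemma eclosed_normP k (A : set 'rV[R]_k) x : eclosed A ->
  (forall e, 0 < e -> exists2 y, A y & `|x - y| < e) -> A x.
Proof.
move=> eA near_x; apply: eA => e e0.
have k0 : 0 < k.+1%:R :> R by [].
have [y Ay xy] := near_x _ (divr_gt0 e0 k0).
exists y => //; apply: le_lt_trans (enorm_le_norm _) _.
by rewrite mulrC -ltr_pdivlMr.
Qed.

Lemma eclosed_closed k (A : set 'rV[R]_k) : eclosed A -> closed A.
Proof.
move=> eA x clx; apply: eclosed_normP eA _ => e e0.
have [y [Ay xy]] := clx _ (nbhsx_ballx x _ e0).
by exists y => //; move: xy; rewrite -ball_normE.
Qed.

Lemma accum_point_in k (A : set 'rV[R]_k) (x : nat -> 'rV[R]_k) l :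
  eclosed A -> (forall j, A (x j)) -> accum_point x l -> A l.
Proof.
move=> eA Ax acc; apply: eA => e e0; have [j _ xj] := acc e e0 0%N.
by exists (x j); rewrite // enormB.
Qed.

End EuclideanNorm.

Section Projection.
Variable R : realType.

Lemma sqdist_continuous k (y : 'rV[R]_k) :
  continuous (fun c : 'rV[R]_k => inner (y - c) (y - c)).
Proof.
apply: (@continuous_big _ _ +%R 0 xpredT add_continuous) => i _ c.
have coord_cont : continuous (fun c : 'rV[R]_k => (y - c) 0 i).
  move=> c'; have sub_cont : {for c', continuous (fun c : 'rV[R]_k => y - c)}.
    by apply: continuousB; [exact: cst_continuous | exact: cvg_id].
  exact: (continuous_comp sub_cont (@coord_continuous _ 1 k 0 i (y - c'))).
exact: (continuousM (coord_cont c) (coord_cont c)).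
Qed.

(* A nonempty closed set has a nearest point to every y: minimize the
   squared distance over the compact part of the set that is at least as
   close to y as a fixed element. *)
Lemma nearest_point_exists k (A : set 'rV[R]_k) y :
  A !=set0 -> eclosed A -> exists p, PiD A y p.
Proof.
move=> [a0 Aa0] eA.
pose h c := inner (y - c) (y - c).
pose K := A `&` [set c | h c <= h a0].
have K0 : K !=set0 by exists a0; split => /=.
have cK : compact K.
  apply: bounded_closed_compact.
    exists (Num.sqrt (h a0) + `|y|); split; first exact: num_real.
    move=> M HM c [_ hc]; apply/ltW/(le_lt_trans _ HM) => /=.
    rewrite -[c](subKr y) (le_trans (ler_normB _ _)) // addrC lerD2r.
    by apply: le_trans (norm_le_enorm _) _; rewrite ler_sqrt ?inner_ge0.
  apply: closedI; first exact: eclosed_closed.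
  apply: (preimage_closed (f := h) (D := [set x | x <= h a0])); last first.
    exact: closed_le.
  by move=> z _; exact: sqdist_continuous.
have [p Kp pmin] := EVT_min_rV K0 cK
  (continuous_subspaceT (@sqdist_continuous k y)).
move: Kp; rewrite inE => -[Ap hp]; exists p; split => // d Ad.
rewrite /enorm ler_sqrt ?inner_ge0 //.
have [hd|hd] := leP (h d) (h a0); first by apply: pmin; rewrite inE.
exact: le_trans hp (ltW hd).
Qed.

Lemma projC_in k (C : set 'rV[R]_k) y : C !=set0 -> eclosed C -> C (projC C y).
Proof.
move=> C0 eC; have [p Pp] := nearest_point_exists y C0 eC.
by have [] := @xgetPex _ y (PiD C y) (ex_intro _ p Pp).
Qed.

End Projection.

Section Sequences.
Variable R : realType.

Lemma expr_eventually_lt (q c : R) : `|q| < 1 -> 0 < c ->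
  exists N, forall j, (N <= j)%N -> q ^+ j < c.
Proof.
move=> q1 c0; have [N _ HN] := (cvgrPdist_lt _ _).1 (cvg_expr q1) c c0.
by exists N => j /HN /=; rewrite sub0r normrN; apply: le_lt_trans (ler_norm _).
Qed.

Lemma expr_unbounded (q c M : R) : 1 < q -> 0 < c -> exists j : nat, M < c * q ^+ j.
Proof.
move=> q1 c0; have q0 : 0 < q by apply: lt_trans q1.
have Mc : 0 < c / (`|M| + 1) by rewrite divr_gt0 // ltr_wpDl.
have qV1 : `|q^-1| < 1 by rewrite ger0_norm ?invr_ge0 ?ltW // invf_lt1.
have [N HN] := expr_eventually_lt qV1 Mc; exists N.
have := HN N (leqnn N); rewrite exprVn ltr_pdivlMr ?ltr_wpDl // mulrC.
rewrite ltr_pdivrMr ?exprn_gt0 // => lt_M.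
by apply: le_lt_trans lt_M; rewrite (le_trans (ler_norm M)) ?lerDl.
Qed.

Lemma contraction_vanishes (V : nat -> R) (q : R) K :
  0 <= q < 1 -> (forall k, 0 <= V k) ->
  (forall k, (K <= k)%N -> V k.+1 <= q * V k) ->
  forall e, 0 < e -> exists N, forall k, (N <= k)%N -> V k < e.
Proof.
move=> /andP[q0 q1] V0 contract e e0.
have decay d : V (K + d)%N <= q ^+ d * V K.
  elim: d => [|d IH]; first by rewrite addn0 expr0 mul1r.
  rewrite addnS exprS -mulrA (le_trans (contract _ (leq_addr _ _))) //.
  exact: ler_wpM2l.
have VK1 : 0 < V K + 1 by rewrite ltr_wpDl.
have q_lt1 : `|q| < 1 by rewrite ger0_norm.
have [N HN] := expr_eventually_lt q_lt1 (divr_gt0 e0 VK1).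
exists (K + N)%N => k Kk; rewrite -(subnKC (leq_trans (leq_addr N K) Kk)).
apply: le_lt_trans (decay _) _.
have qj : q ^+ (k - K) < e / (V K + 1) by apply: HN; lia.
rewrite ltr_pdivlMr // in qj; apply: le_lt_trans qj.
by rewrite ler_wpM2l ?exprn_ge0 ?lerDl.
Qed.

End Sequences.

Section PenaltyParameter.
Variables (R : realType) (rho V : nat -> R) (beta eta : R).
Hypotheses (rho0_gt0 : 0 < rho 0%N) (beta_gt1 : 1 < beta).
Hypothesis rho_update : forall k, rho k.+1 =
  if (k == 0)%N || (V k <= eta * V k.-1) then rho k else beta * rho k.

Lemma rho_gt0 k : 0 < rho k.
Proof.
elim: k => [|k IH] //; rewrite rho_update; case: ifP => // _.
by rewrite mulr_gt0 // (lt_trans ltr01).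
Qed.

Lemma rho_nondecreasing k j : (k <= j)%N -> rho k <= rho j.
Proof.
move=> /subnKC <-; elim: (j - k)%N => [|d IH]; first by rewrite addn0.
rewrite addnS (le_trans IH) // rho_update; case: ifP => // _.
by rewrite ler_peMl ?ltW ?rho_gt0.
Qed.

(* A bounded penalty sequence is eventually constant: every increase
   multiplies it by beta > 1. *)
Lemma bounded_rho_stabilizes : (exists M, forall k, rho k <= M) ->
  exists K, forall k, (K <= k)%N -> rho k.+1 = rho k.
Proof.
move=> [M rho_le_M]; apply: contrapT => unstable.
have grows j : exists k, rho 0%N * beta ^+ j <= rho k.
  elim: j => [|j [k rk]]; first by exists 0%N; rewrite expr0 mulr1.
  have [k' kk' jump] : exists2 k', (k <= k')%N & rho k'.+1 = beta * rho k'.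
    apply: contrapT => still; apply: unstable; exists k => k' kk'.
    move: (rho_update k'); case: ifP => // _ jump.
    by exfalso; apply: still; exists k'.
  exists k'.+1; rewrite jump exprS mulrCA ler_wpM2l ?(ltW (lt_trans ltr01 _)) //.
  exact: le_trans rk (rho_nondecreasing kk').
have [j Mj] := expr_unbounded M beta_gt1 rho0_gt0.
have [k rk] := grows j.
by have := rho_le_M k; rewrite leNgt (lt_le_trans Mj rk).
Qed.

Lemma stable_rho_contracts K : (forall k, (K <= k)%N -> rho k.+1 = rho k) ->
  forall k, (K <= k)%N -> V k.+1 <= eta * V k.
Proof.
move=> stable k Kk; have := rho_update k.+1.
rewrite (stable k.+1 (leqW Kk)) /=; case: ifP => // _ same.
suff : rho k.+1 < rho k.+1 by rewrite ltxx.
by rewrite [X in _ < X]same ltr_pMl ?rho_gt0.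
Qed.

Lemma bounded_rho_residual_vanishes : 0 <= eta < 1 -> (forall k, 0 <= V k) ->
  (exists M, forall k, rho k <= M) ->
  forall e, 0 < e -> exists N, forall k, (N <= k)%N -> V k < e.
Proof.
move=> eta01 V0 /bounded_rho_stabilizes [K stable].
exact: contraction_vanishes eta01 V0 (stable_rho_contracts stable).
Qed.

Lemma unbounded_rho_large : ~ (exists M, forall k, rho k <= M) ->
  forall r, exists N, forall k, (N <= k)%N -> r < rho k.
Proof.
move=> unbounded r; apply: contrapT => small; apply: unbounded; exists r => k.
rewrite leNgt; apply/negP => r_lt; apply: small; exists k => j kj.
exact: lt_le_trans r_lt (rho_nondecreasing kj).
Qed.

End PenaltyParameter.

Section Closeness.
Variable R : realType.

Definition close_to k (A : set 'rV[R]_k) (e : R) (y : 'rV[R]_k) : Prop :=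
  exists2 p, A p & `|y - p| < e.

Lemma continuous_at_lt (V W : normedModType R) (F : V -> W) x :
  {for x, continuous F} ->
  forall e, 0 < e -> exists2 d, 0 < d & forall t, `|x - t| < d -> `|F x - F t| < e.
Proof.
move=> F_cont e e0; have near_x := (cvgrPdist_lt _ _).1 F_cont e e0.
by have [d d0 Fd] := (nbhs_normP _ _).1 (near_x _); exists d.
Qed.

Lemma accum_image_in n m (G : 'rV[R]_n -> 'rV[R]_m) (C : set 'rV[R]_m)
    (w : nat -> 'rV[R]_n) wbar :
  eclosed C -> {for wbar, continuous G} -> accum_point w wbar ->
  (forall e, 0 < e -> exists2 d, 0 < d & exists N, forall j, (N <= j)%N ->
      `|w j - wbar| < d -> close_to C e (G (w j))) ->
  C (G wbar).
Proof.
move=> eC G_cont acc approach; apply: eclosed_normP eC _ => e e0.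
have e20 : 0 < e / 2 by rewrite divr_gt0.
have [dG dG0 G_near] := continuous_at_lt G_cont e20.
have [d d0 [N close]] := approach _ e20.
have dmin : 0 < minr d dG by rewrite lt_min d0 dG0.
have [j Nj wj] := acc _ dmin N.
have := le_lt_trans (norm_le_enorm _) wj; rewrite lt_min => /andP[wj_d wj_dG].
have [p Cp Gp] := close j Nj wj_d; exists p => //.
have GwG : `|G wbar - G (w j)| < e / 2 by apply: G_near; rewrite distrC.
rewrite -(subrKA (G (w j))) (splitr e).
exact: le_lt_trans (ler_normD _ _) (ltrD GwG Gp).
Qed.

Lemma penalty_arith (r d c MU e : R) : 0 < e -> 0 < r -> 0 <= d -> 0 <= MU ->
  r / 2 * d ^+ 2 <= c -> 8 * c / e ^+ 2 + 2 * MU / e < r -> d + r^-1 * MU < e.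
Proof.
move=> e0 r0 d0 MU0 pen r_big.
have c0 : 0 <= c.
  by apply: le_trans _ pen; rewrite mulr_ge0 ?sqr_ge0 // divr_ge0 // ltW.
have e20 : 0 < e ^+ 2 by rewrite exprn_gt0.
have r_c : 8 * c < r * e ^+ 2.
  rewrite -ltr_pdivrMr //; apply: le_lt_trans _ r_big; rewrite lerDl.
  by rewrite divr_ge0 ?mulr_ge0 // ltW.
have r_MU : 2 * MU < r * e.
  rewrite -ltr_pdivrMr //; apply: le_lt_trans _ r_big; rewrite lerDr.
  by rewrite divr_ge0 ?mulr_ge0 // ltW.
have d_small : d < e / 2.
  rewrite ltNge; apply/negP => d_big.
  have : e ^+ 2 <= 4 * d ^+ 2 by rewrite !expr2; nra.
  move: pen; rewrite expr2 => pen; nra.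
have : r^-1 * MU < e / 2 by rewrite mulrC ltr_pdivrMr //; lra.
lra.
Qed.

Lemma penalized_point_close m (C : set 'rV[R]_m) (y v : 'rV[R]_m) (r c MU e : R) :
  C !=set0 -> eclosed C -> 0 < e -> 0 < r -> enorm v <= MU ->
  r / 2 * distC C (y + r^-1 *: v) ^+ 2 <= c ->
  8 * c / e ^+ 2 + 2 * MU / e < r -> close_to C e y.
Proof.
move=> C0 eC e0 r0 vMU pen r_big.
set z := y + r^-1 *: v; exists (projC C z); first exact: projC_in.
have -> : y - projC C z = (z - projC C z) - r^-1 *: v by rewrite /z addrAC addrK.
apply: le_lt_trans (ler_normB _ _) _.
apply: le_lt_trans (penalty_arith e0 r0 (enorm_ge0 _) _ pen r_big).
  apply: lerD; first exact: norm_le_enorm.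
  rewrite normrZ gtr0_norm ?invr_gt0 // ler_pM2l ?invr_gt0 //.
  exact: le_trans (norm_le_enorm _) vMU.
exact: le_trans (enorm_ge0 _) vMU.
Qed.

End Closeness.

Section Regimes.
Variables (R : realType) (n m : nat) (G : 'rV[R]_n -> 'rV[R]_m).
Variables (C : set 'rV[R]_m) (w : nat -> 'rV[R]_n) (u : nat -> 'rV[R]_m).
Variable rho : nat -> R.
Hypotheses (C0 : C !=set0) (eC : eclosed C).

(* Regime (a): the residual V_k bounds the distance of G (w k.+1) to C. *)
Lemma vanishing_residual_close :
  (forall e, 0 < e -> exists N, forall k, (N <= k)%N ->
     Vrho G C (rho k) (w k.+1) (u k) < e) ->
  forall e, 0 < e -> exists N, forall j, (N <= j)%N -> close_to C e (G (w j)).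
Proof.
move=> V_small e e0; have [N HN] := V_small e e0; exists N.+1 => -[|k] // Nk.
exists (projC C (G (w k.+1) + (rho k)^-1 *: u k)); first exact: projC_in.
exact: le_lt_trans (norm_le_enorm _) (HN k Nk).
Qed.

Lemma unbounded_penalty_close (f : 'rV[R]_n -> R) wbar (B MU : R) :
  {for wbar, continuous f} -> (forall k, 0 < rho k) ->
  (forall k, enorm (u k) <= MU) ->
  (forall k, AugL f G C (rho k) (w k.+1) (u k) <= B) ->
  (forall r, exists N, forall k, (N <= k)%N -> r < rho k) ->
  forall e, 0 < e -> exists2 d, 0 < d & exists N, forall j, (N <= j)%N ->
    `|w j - wbar| < d -> close_to C e (G (w j)).
Proof.
move=> f_cont rho_gt0 uMU AugL_le rho_large e e0.
have [d d0 f_near] := continuous_at_lt f_cont ltr01.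
pose c := B - f wbar + 1.
have [N rho_big] := rho_large (8 * c / e ^+ 2 + 2 * MU / e).
exists d => //; exists N.+1 => -[|k] // Nk wk.
apply: penalized_point_close C0 eC e0 (rho_gt0 k) (uMU k) _ (rho_big k Nk).
have := f_near (w k.+1); rewrite distrC => /(_ wk); rewrite ltr_norml.
by have := AugL_le k; rewrite /AugL /c; lra.
Qed.

End Regimes.

Theorem mainTheorem7 (R : realType) (n m : nat)
  (f : 'rV[R]_n -> R) (G : 'rV[R]_n -> 'rV[R]_m)
  (C : set 'rV[R]_m) (D : set 'rV[R]_n)
  (rho0 beta eta : R) (U : set 'rV[R]_m)
  (w eps : nat -> 'rV[R]_n) (u : nat -> 'rV[R]_m) (rho : nat -> R) :
  C1r f -> C1 G ->
  C !=set0 -> eclosed C -> econvex C ->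
  D !=set0 -> eclosed D ->
  0 < rho0 -> 1 < beta -> 0 < eta < 1 ->
  U !=set0 -> ebounded U ->
  algorithm2 f G C D rho0 beta eta U w eps u rho ->
  forall wbar : 'rV[R]_n, accum_point w wbar ->
  (exists M : R, forall k, rho k <= M) \/
  (exists B : R, forall k, AugL f G C (rho k) (w k.+1) (u k) <= B) ->
  C (G wbar) /\ D wbar.
Proof.
move=> [f_diff _] [G_diff _] C0 eC _ _ eD rho0_gt0 beta_gt1 /andP[eta0 eta1] _
  [MU U_bounded] [rho0E Dw0 Uu grad_step rho_update] wbar acc bounds.
have Dw k : D (w k) by case: k => [|k] //; have [g _ [Dk _]] := grad_step k.
split; last exact: accum_point_in eD Dw acc.
pose V k := Vrho G C (rho k) (w k.+1) (u k).
have rho_first_gt0 : 0 < rho 0%N by rewrite rho0E.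
have update k : rho k.+1 =
    if (k == 0)%N || (V k <= eta * V k.-1) then rho k else beta * rho k.
  case: k => [|k]; last exact: rho_update.
  by rewrite rho_update !eqxx /=.
apply: (accum_image_in eC (differentiable_continuous (G_diff wbar)) acc) => e e0.
have [rho_bounded|rho_unbounded] := pselect (exists M, forall k, rho k <= M).
  have eta_bnd : 0 <= eta < 1 by rewrite ltW ?eta1.
  have V_small := bounded_rho_residual_vanishes rho_first_gt0 beta_gt1 update eta_bnd
    (fun k => enorm_ge0 _) rho_bounded.
  have [N close] := vanishing_residual_close (w := w) C0 eC V_small e0.
  by exists 1 => //; exists N => j Nj _; apply: close.
have [//|[B AugL_le]] := bounds.
have rho_pos := rho_gt0 rho_first_gt0 beta_gt1 update.
have rho_large := unbounded_rho_large rho_first_gt0 beta_gt1 update rho_unbounded.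
have u_bounded k : enorm (u k) <= MU by exact: U_bounded.
exact: (unbounded_penalty_close C0 eC (differentiable_continuous (f_diff wbar))
  rho_pos u_bounded AugL_le rho_large e0).
Qed.
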